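(* With all notation and hypotheses as below, for every $(A_0,\dots,A_N)\in(X^* )^{N+1}$ and $(B_0,\dots,B_N)\in X^{N+1}$, define $C_0=u_NA_N$, $C_{N-i}-C_{N-i-1}=u_i(A_i-A_{i+1})$ for $i=0,\dots,N-1$ (with $A_{N+1}=0$), and $D_i=B_{N-i}$ for $i=0,\dots,N$. Then \[ \mathbf{U}_{\mathcal A}(A_0,\dots,A_N,B_0,\dots,B_N)=\mathbf{V}_{\mathcal B}(C_0,\dots,C_N,D_0,\dots,D_N), \] and the map $(A,B)\mapsto(C,D)$ is a bijection of $(X^* )^{N+1}\times X^{N+1}$ onto itself.
   Context: $X$ is a reflexive Banach space with norm $\|\cdot\|$, dual $X^*$ with dual norm $\|\cdot\|_*$ and pairing $\langle\cdot,\cdot\rangle$; $L>0$, $\sigma>0$, $N\ge1$; coefficients $\{a_{k,i}\}_{0\le i<k\le N}$, $\{b_{k,i}\}_{0\le i\le k\le N}$ are real with convention $b_{0,0}=-1$; $\{u_i\}_{i=0}^N$ is a positive nondecreasing real sequence and $v_i=1/u_{N-i}$. For $(A,B)$: $A_{N+1}=0$, $x_0=B_0$, $x_{k+1}=x_k-\sum_{i=0}^{k+1}b_{k+1,i}B_i$, and $\mathbf{U}_{\mathcal A}=\sum_{k=0}^{N-1}\frac{u_k}{2L}\|A_k-A_{k+1}\|_*^2+\sum_{k=0}^{N-1}\frac{\sigma}{2}\|B_k-B_{k+1}\|^2+\sum_{k=0}^{N-1}\langle\sum_{i=0}^{k}a_{k+1,i}A_i,B_{k+1}\rangle-\sum_{k=0}^{N}u_k\langle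 A_k-A_{k+1},x_k\rangle$. For $(C,D)$: $\mathbf{V}_{\mathcal B}=\sum_{k=0}^{N-1}\frac{v_{k+1}}{2L}\|C_k-C_{k+1}\|_*^2+\sum_{k=0}^{N-1}\frac{\sigma}{2}\|D_k-D_{k+1}\|^2+\sum_{k=0}^{N}\langle\sum_{i=0}^{k}b_{N-i,N-k}C_i,D_k\rangle+\sum_{k=0}^{N-1}\langle v_{k+1}C_{k+1}-\sum_{j=0}^{k}(v_{j+1}-v_j)C_j,\sum_{i=0}^{k}a_{N-i,N-1-k}D_i\rangle$. *)

From HB Require Import structures.
From mathcomp Require Import all_boot all_order all_algebra.
From mathcomp Require Import all_classical all_reals all_analysis.
Set Implicit Arguments. Unset Strict Implicit. Unset Printing Implicit Defensive.
Import Order.TTheory GRing.Theory Num.Theory.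
Import numFieldNormedType.Exports.
Local Open Scope classical_set_scope.
Local Open Scope ring_scope.

Section Dual.
Variables (R : realType) (X : normedModType R).

(* elements of the topological dual X* (continuous linear functionals): continuous linear functionals X -> R;
   X^* is represented inside the function space X -> R *)
Definition is_dual (f : X -> R) : Prop :=
  (forall (c : R) (x y : X), f (c *: x + y) = c * f x + f y) /\ continuous f.

Definition dnorm (f : X -> R) : R :=
  sup [set `|f x| | x in [set x : X | `|x| <= 1]].

(* reflexivity: the canonical embedding J : X -> X^**, (J x) f = f x, is onto
   the bidual X^** (linear functionals on X^* bounded for the dual norm) *)
Definition is_bidual (phi : (X -> R) -> R) : Prop :=
  (forall (c : R) (f g : X -> R), is_dual f -> is_dual g ->
      phi (c *: f + g) = c * phi f + phi g) /\
  (exists M : R, forall f, is_dual f -> `|phi f| <= M * dnorm f).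

Definition reflexive_space : Prop :=
  forall phi, is_bidual phi -> exists x : X, forall f, is_dual f -> phi f = f x.

End Dual.

Section Seqs.
Variables (R : realType) (X : normedModType R) (N : nat).

(* extension of a vector indexed by {0..N} to nat, zero beyond N
   (this realizes the convention A_{N+1} = 0) *)
Definition ext (T : zmodType) (A : 'I_N.+1 -> T) (k : nat) : T :=
  if (k < N.+1)%N then A (inord k) else 0.

Fixpoint xseq (b : nat -> nat -> R) (B : nat -> X) (k : nat) : X :=
  match k with
  | 0 => B 0
  | k'.+1 => xseq b B k' - \sum_(i < k'.+2) b k'.+1 i *: B i
  end.

Definition Ufun (L sigma : R) (a b : nat -> nat -> R) (u : nat -> R)
    (A0 : 'I_N.+1 -> (X -> R)) (B0 : 'I_N.+1 -> X) : R :=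
  let A := ext A0 in let B := ext B0 in let x := xseq b B in
  \sum_(k < N) (u k / (2 * L)) * dnorm (A k - A k.+1) ^+ 2
  + \sum_(k < N) (sigma / 2) * `|B k - B k.+1| ^+ 2
  + \sum_(k < N) (\sum_(i < k.+1) a k.+1 i *: A i) (B k.+1)
  - \sum_(k < N.+1) u k * (A k - A k.+1) (x k).

Definition vseq (u : nat -> R) (i : nat) : R := 1 / u (N - i)%N.

Definition Vfun (L sigma : R) (a b : nat -> nat -> R) (u : nat -> R)
    (C0 : 'I_N.+1 -> (X -> R)) (D0 : 'I_N.+1 -> X) : R :=
  let C := ext C0 in let D := ext D0 in let v := vseq u in
  \sum_(k < N) (v k.+1 / (2 * L)) * dnorm (C k - C k.+1) ^+ 2
  + \sum_(k < N) (sigma / 2) * `|D k - D k.+1| ^+ 2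
  + \sum_(k < N.+1) (\sum_(i < k.+1) b (N - i)%N (N - k)%N *: C i) (D k)
  + \sum_(k < N) (v k.+1 *: C k.+1 - \sum_(j < k.+1) (v j.+1 - v j) *: C j)
                   (\sum_(i < k.+1) a (N - i)%N (N - 1 - k)%N *: D i).

(* C_0 = u_N A_N,  C_{m+1} = C_m + u_{N-m-1} (A_{N-m-1} - A_{N-m}),
   i.e. C_{N-i} - C_{N-i-1} = u_i (A_i - A_{i+1}) *)
Fixpoint Cseq (u : nat -> R) (A : nat -> (X -> R)) (m : nat) : X -> R :=
  match m with
  | 0 => u N *: A N
  | m'.+1 => Cseq u A m' + u (N - m'.+1)%N *: (A (N - m'.+1)%N - A (N - m')%N)
  end.

Definition ABtoCD (u : nat -> R)
    (p : ('I_N.+1 -> (X -> R)) * ('I_N.+1 -> X)) :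
    ('I_N.+1 -> (X -> R)) * ('I_N.+1 -> X) :=
  (fun i : 'I_N.+1 => Cseq u (ext p.1) i,
   fun i : 'I_N.+1 => p.2 (inord (N - i)%N)).

Definition dualPairs : set (('I_N.+1 -> (X -> R)) * ('I_N.+1 -> X)) :=
  [set p | forall i, is_dual (p.1 i)].

End Seqs.

(* (A, B) |-> (C, D) is an Abel transformation: C_i is the partial sum
   sum_(m <= i) u_(N-m) (A_(N-m) - A_(N-m+1)) (this uses A_(N+1) = 0), and
   since v_n u_(N-n) = 1 it is inverted by
   A_(N-n) = v_n C_n - sum_(j < n) (v_(j+1) - v_j) C_j.
   Under this substitution the squared-difference terms of V are those of U read
   backwards, because C_k - C_(k+1) = - u_(N-k-1) (A_(N-k-1) - A_(N-k)).  The
   b-coupling of V, expanded through the partial sums, is a triple sum over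
   m <= i <= k, and the a-coupling, whose left factor is exactly the inverse
   formula for A_(N-k-1), is a double sum over i <= k; reversing all indices
   turns them into -sum_k u_k <A_k - A_(k+1), x_k> with
   x_k = - sum_(j <= k) sum_(i <= j) b_(j,i) B_i, and into the a-coupling of U. *)

From HB Require Import structures.
From mathcomp Require Import all_boot all_order all_algebra.
From mathcomp Require Import all_classical all_reals all_analysis.
From mathcomp Require Import ring lra zify.
Import Order.TTheory GRing.Theory Num.Theory.
Import numFieldNormedType.Exports.
Local Open Scope classical_set_scope.
Local Open Scope ring_scope.
Set Implicit Arguments. Unset Strict Implicit. Unset Printing Implicit Defensive.

Lemma sup_pmul (R : realType) (c : R) (S : set R) : 0 <= c -> S !=set0 ->
  sup [set c * y | y in S] = c * sup S.
Proof.
rewrite le_eqVlt => /predU1P[<- [y Sy]|c0 S0].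
  have -> : [set 0 * y | y in S] = [set 0].
    apply/seteqP; split=> [_ [z _ <-]|_ ->]; first by rewrite mul0r.
    by exists y => //; rewrite mul0r.
  by rewrite sup1 mul0r.
have cS0 : [set c * y | y in S] !=set0 by case: S0 => y Sy; exists (c * y), y.
have [supS|nsupS] := pselect (has_sup S).
  apply/eqP; rewrite eq_le; apply/andP; split.
    apply: ge_sup => // _ [y Sy <-]; rewrite ler_pM2l //.
    exact: sup_upper_bound.
  have supcS : has_sup [set c * y | y in S].
    split=> //; exists (c * sup S) => _ [y Sy <-].
    by rewrite ler_pM2l //; exact: sup_upper_bound.
  rewrite -ler_pdivlMl // mulrC; apply: ge_sup => // y Sy.
  by rewrite ler_pdivlMr // mulrC; apply: sup_upper_bound => //; exists y.
rewrite !sup_out ?mulr0 // => -[_ [M ubM]]; apply: nsupS; split=> //.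
by exists (M / c) => y Sy; rewrite ler_pdivlMr // mulrC; apply: ubM; exists y.
Qed.

Lemma scaler_fctE (R : realType) (T : Type) (c : R) (f : T -> R) x :
  (c *: f) x = c * f x.
Proof. by []. Qed.

Section DualSpace.
Variables (R : realType) (X : normedModType R).
Implicit Types (f g : X -> R) (x y : X).

Lemma dual0 {f} : is_dual f -> f 0 = 0.
Proof.
by move=> [lin _]; have := lin 1 0 0; rewrite scale1r addr0 mul1r; lra.
Qed.

Lemma dualD {f} x y : is_dual f -> f (x + y) = f x + f y.
Proof. by move=> [lin _]; rewrite -[x]scale1r lin mul1r scale1r. Qed.

Lemma dualZ {f} c x : is_dual f -> f (c *: x) = c * f x.
Proof. by move=> df; have := df.1 c x 0; rewrite addr0 (dual0 df) addr0. Qed.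

Lemma dualN {f} x : is_dual f -> f (- x) = - f x.
Proof. by move=> df; rewrite -scaleN1r dualZ // mulN1r. Qed.

Lemma dual_sum {f} I r (P : pred I) (F : I -> X) : is_dual f ->
  f (\sum_(i <- r | P i) F i) = \sum_(i <- r | P i) f (F i).
Proof.
by move=> df; apply: big_morph => [x y|]; [exact: dualD | exact: dual0].
Qed.

Lemma is_dual0 : is_dual (0 : X -> R).
Proof. by split=> [c x y|]; [rewrite /= mulr0 addr0 | exact: cst_continuous]. Qed.

Lemma is_dualD f g : is_dual f -> is_dual g -> is_dual (f + g).
Proof.
move=> [linf cf] [ling cg]; split=> [c x y|x].
  by rewrite !addrfctE linf ling; lra.
exact: continuousD (cf x) (cg x).
Qed.

Lemma is_dualZ (c : R) f : is_dual f -> is_dual (c *: f).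
Proof.
move=> [linf cf]; split=> [k x y|x].
  by rewrite !scaler_fctE linf; ring.
exact: continuousZl_tmp (cf x).
Qed.

Lemma is_dualB f g : is_dual f -> is_dual g -> is_dual (f - g).
Proof.
by move=> df dg; rewrite -scaleN1r; apply: is_dualD => //; apply: is_dualZ.
Qed.

Lemma is_dual_sum I r (P : pred I) (F : I -> X -> R) :
  (forall i, P i -> is_dual (F i)) -> is_dual (\sum_(i <- r | P i) F i).
Proof. by apply: big_ind; [exact: is_dual0 | exact: is_dualD]. Qed.

Lemma dnormZ (c : R) f : dnorm (c *: f) = `|c| * dnorm f.
Proof.
rewrite /dnorm -sup_pmul //; last by exists `|f 0|, 0 => //=; rewrite normr0.
congr sup; rewrite image_comp; apply: eq_imagel => x _.
exact: normrM.
Qed.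

End DualSpace.

Section Reindex.
Variable V : nmodType.
Implicit Types n : nat.

Lemma sum_ord_leq {n k} (F : nat -> V) : (k < n)%N ->
  \sum_(i < k.+1) F i = \sum_(i < n) if (i <= k)%N then F i else 0.
Proof. by move=> ltkn; rewrite (big_ord_widen n F ltkn) big_mkcond. Qed.

Lemma sum_triangle n (F : nat -> nat -> V) :
  \sum_(k < n) \sum_(i < k.+1) F k i
  = \sum_(k < n) \sum_(i < n) if (i <= k)%N then F k i else 0.
Proof. by apply: eq_bigr => k _; rewrite (sum_ord_leq (F k) (ltn_ord k)). Qed.

Lemma sum_tetrahedron n (F : nat -> nat -> nat -> V) :
  \sum_(k < n) \sum_(j < k.+1) \sum_(i < j.+1) F k j i
  = \sum_(k < n) \sum_(j < n) \sum_(i < n)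
      if (i <= j <= k)%N then F k j i else 0.
Proof.
apply: eq_bigr => k _.
rewrite (sum_ord_leq (fun j => \sum_(i < j.+1) F k j i) (ltn_ord k)).
apply: eq_bigr => j _; have [lejk|] := leqP j k; last first.
  by move=> _; rewrite big1 // => i _; rewrite andbF.
rewrite (sum_ord_leq (F k j) (leq_ltn_trans lejk (ltn_ord k))).
by apply: eq_bigr => i _; rewrite andbT.
Qed.

Lemma sum_triangle_rev n (F : nat -> nat -> V) :
  \sum_(k < n) \sum_(i < k.+1) F (n - i.+1)%N (n - k.+1)%N
  = \sum_(k < n) \sum_(i < k.+1) F k i.
Proof.
rewrite (sum_triangle n (fun k i => F (n - i.+1)%N (n - k.+1)%N)) sum_triangle.
rewrite exchange_big [RHS](reindex_inj rev_ord_inj).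
apply: eq_bigr => i _; rewrite [RHS](reindex_inj rev_ord_inj).
apply: eq_bigr => k _ /=; have ltin := ltn_ord i; have ltkn := ltn_ord k.
by have -> : (n - k.+1 <= n - i.+1)%N = (i <= k)%N by apply/idP/idP; lia.
Qed.

Lemma sum_tetrahedron_rev n (F : nat -> nat -> nat -> V) :
  \sum_(k < n) \sum_(j < k.+1) \sum_(i < j.+1)
      F (n - i.+1)%N (n - j.+1)%N (n - k.+1)%N
  = \sum_(k < n) \sum_(j < k.+1) \sum_(i < j.+1) F k j i.
Proof.
pose G k j i := F (n - i.+1)%N (n - j.+1)%N (n - k.+1)%N.
rewrite (sum_tetrahedron n G) sum_tetrahedron exchange_big; under eq_bigr do rewrite exchange_big.
rewrite exchange_big [RHS](reindex_inj rev_ord_inj); apply: eq_bigr => i _.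
rewrite [RHS](reindex_inj rev_ord_inj); apply: eq_bigr => j _.
rewrite [RHS](reindex_inj rev_ord_inj); apply: eq_bigr => k _ /=.
have ltin := ltn_ord i; have ltjn := ltn_ord j; have ltkn := ltn_ord k.
by have -> : (n - k.+1 <= n - j.+1 <= n - i.+1)%N = (i <= j <= k)%N
  by apply/idP/idP; lia.
Qed.

End Reindex.

Section AbelTransform.
Variables (R : realType) (X : normedModType R) (N : nat) (u : nat -> R).
Hypothesis u_gt0 : forall i, (i <= N)%N -> 0 < u i.

Local Notation v := (vseq N u).

Definition Aseq (C : nat -> X -> R) (n : nat) : X -> R :=
  v n *: C n - \sum_(j < n) (v j.+1 - v j) *: C j.

Lemma vseqK {n} : (n <= N)%N -> v n * u (N - n)%N = 1.
Proof.
by move=> lenN; rewrite /vseq mul1r mulVf // gt_eqF // u_gt0 // leq_subr.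
Qed.

Lemma Cseq_sum (A : nat -> X -> R) : A N.+1 = 0 -> forall i, (i <= N)%N ->
  Cseq N u A i = \sum_(m < i.+1) u (N - m)%N *: (A (N - m)%N - A (N - m).+1).
Proof.
move=> AN1; elim=> [_|i IH ltiN]; first by rewrite big_ord1 /= subn0 AN1 subr0.
by rewrite /= IH ?(ltnW ltiN) // [in RHS]big_ord_recr /= subnSK.
Qed.

Lemma CseqK (A : nat -> X -> R) n :
  (n <= N)%N -> Aseq (Cseq N u A) n = A (N - n)%N.
Proof.
elim: n => [_|n IH ltnN].
  by rewrite /Aseq big_ord0 subr0 /= scalerA -{2}(subn0 N) vseqK // scale1r subn0.
rewrite /Aseq big_ord_recr /= scalerDr scalerA (vseqK ltnN) scale1r scalerBl.
rewrite -(IH (ltnW ltnN)) /Aseq; ring.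
Qed.

Lemma AseqK (C A : nat -> X -> R) :
  (forall m, (m <= N)%N -> A m = Aseq C (N - m)%N) ->
  forall k, (k <= N)%N -> Cseq N u A k = C k.
Proof.
move=> DA; elim=> [_|k IH ltkN] /=.
  rewrite DA // subnn /Aseq big_ord0 subr0 scalerA mulrC.
  by rewrite -{2}(subn0 N) vseqK ?scale1r.
rewrite IH ?(ltnW ltkN) // !DA ?leq_subr // subKn // subKn ?(ltnW ltkN) //.
have -> : Aseq C k.+1 - Aseq C k = v k.+1 *: (C k.+1 - C k).
  by rewrite /Aseq big_ord_recr /= scalerBr scalerBl; ring.
by rewrite scalerA mulrC (vseqK ltkN) scale1r; ring.
Qed.

Lemma Cseq_dual (A : nat -> X -> R) : (forall k, is_dual (A k)) ->
  forall i, is_dual (Cseq N u A i).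
Proof.
move=> dA; elim=> [|i IH] /=; first exact: is_dualZ.
by apply: is_dualD => //; apply/is_dualZ/is_dualB.
Qed.

Lemma Aseq_dual (C : nat -> X -> R) : (forall k, is_dual (C k)) ->
  forall n, is_dual (Aseq C n).
Proof.
move=> dC n; apply: is_dualB; first exact: is_dualZ.
by apply: is_dual_sum => j _; apply: is_dualZ.
Qed.

End AbelTransform.

Lemma xseq_sum (R : realType) (X : normedModType R) (b : nat -> nat -> R)
    (B : nat -> X) : b 0%N 0%N = -1 -> forall k,
  xseq b B k = - \sum_(j < k.+1) \sum_(i < j.+1) b j i *: B i.
Proof.
move=> b00; elim=> [|k IH] /=; first by rewrite !big_ord1 b00 scaleN1r opprK.
by rewrite IH [in RHS]big_ord_recr /= opprD.
Qed.

Section CouplingTerms.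
Variables (R : realType) (X : normedModType R) (N : nat) (u : nat -> R).
Variables (A C : nat -> X -> R) (B D : nat -> X).
Hypothesis u_gt0 : forall i, (i <= N)%N -> 0 < u i.
Hypothesis A_dual : forall k, is_dual (A k).
Hypothesis AN1 : A N.+1 = 0.
Hypothesis CE : forall k, (k <= N)%N -> C k = Cseq N u A k.
Hypothesis DE : forall k, (k <= N)%N -> D k = B (N - k)%N.

Local Notation v := (vseq N u).

Lemma dual_step_sum_rev (L : R) :
  \sum_(k < N) v k.+1 / (2 * L) * dnorm (C k - C k.+1) ^+ 2
  = \sum_(k < N) u k / (2 * L) * dnorm (A k - A k.+1) ^+ 2.
Proof.
rewrite [RHS](reindex_inj rev_ord_inj); apply: eq_bigr => k _ /=.
have ltkN := ltn_ord k; rewrite !CE ?(ltnW ltkN) //= opprD addrA subrr add0r.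
rewrite -scaleNr dnormZ normrN gtr0_norm ?u_gt0 ?leq_subr // subnSK //.
transitivity (v k.+1 * u (N - k.+1)%N * (u (N - k.+1)%N / (2 * L))
  * dnorm (A (N - k.+1)%N - A (N - k)%N) ^+ 2); first by ring.
by rewrite (vseqK u_gt0 ltkN) mul1r.
Qed.

Lemma primal_step_sum_rev (sigma : R) :
  \sum_(k < N) sigma / 2 * `|D k - D k.+1| ^+ 2
  = \sum_(k < N) sigma / 2 * `|B k - B k.+1| ^+ 2.
Proof.
rewrite [RHS](reindex_inj rev_ord_inj); apply: eq_bigr => k _ /=.
have ltkN := ltn_ord k.
by rewrite !DE ?(ltnW ltkN) // subnSK // distrC.
Qed.

Lemma b_coupling_sum (b : nat -> nat -> R) : b 0%N 0%N = -1 ->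
  \sum_(k < N.+1) (\sum_(i < k.+1) b (N - i)%N (N - k)%N *: C i) (D k)
  = - \sum_(k < N.+1) u k * (A k - A k.+1) (xseq b B k).
Proof.
move=> b00; pose F k j i := u k * (b j i * (A k - A k.+1) (B i)).
have dA k : is_dual (A k - A k.+1) by apply: is_dualB.
have -> : - \sum_(k < N.+1) u k * (A k - A k.+1) (xseq b B k)
    = \sum_(k < N.+1) \sum_(j < k.+1) \sum_(i < j.+1) F k j i.
  rewrite -sumrN; apply: eq_bigr => k _.
  rewrite xseq_sum // dualN // dual_sum // mulrN opprK mulr_sumr.
  apply: eq_bigr => j _; rewrite dual_sum // mulr_sumr.
  by apply: eq_bigr => i _; rewrite dualZ.
rewrite -(sum_tetrahedron_rev N.+1 F); apply: eq_bigr => k _.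
have lekN : (k <= N)%N := ltn_ord k.
rewrite fct_sumE; apply: eq_bigr => i _.
have leiN : (i <= N)%N := leq_trans (ltn_ord i : (i <= k)%N) lekN.
rewrite scaler_fctE CE // DE // Cseq_sum // fct_sumE mulr_sumr.
by apply: eq_bigr => m _; rewrite /F !subSS scaler_fctE mulrCA.
Qed.

Lemma a_coupling_sum (a : nat -> nat -> R) :
  \sum_(k < N) (v k.+1 *: C k.+1 - \sum_(j < k.+1) (v j.+1 - v j) *: C j)
                 (\sum_(i < k.+1) a (N - i)%N (N - 1 - k)%N *: D i)
  = \sum_(k < N) (\sum_(i < k.+1) a k.+1 i *: A i) (B k.+1).
Proof.
pose G k i := a k.+1 i * A i (B k.+1).
have -> : \sum_(k < N) (\sum_(i < k.+1) a k.+1 i *: A i) (B k.+1)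
    = \sum_(k < N) \sum_(i < k.+1) G k i.
  by apply: eq_bigr => k _; rewrite fct_sumE.
rewrite -(sum_triangle_rev N G); apply: eq_bigr => k _.
have ltkN := ltn_ord k.
have -> : v k.+1 *: C k.+1 - \sum_(j < k.+1) (v j.+1 - v j) *: C j
    = A (N - k.+1)%N.
  rewrite -(CseqK u_gt0 A ltkN) /Aseq CE //; congr (_ - _).
  apply: eq_bigr => j _.
  by rewrite CE // (leq_trans (ltn_ord j : (j <= k)%N) (ltnW ltkN)).
rewrite dual_sum //; apply: eq_bigr => i _.
have ltiN : (i < N)%N := leq_trans (ltn_ord i) ltkN.
rewrite dualZ // DE ?(ltnW ltiN) // /G subnSK //.
by have -> : (N - 1 - k = N - k.+1)%N by lia.
Qed.

End CouplingTerms.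

Section ReversalMap.
Variables (R : realType) (X : normedModType R) (N : nat) (u : nat -> R).
Hypothesis u_gt0 : forall i, (i <= N)%N -> 0 < u i.

Lemma ext_ord (T : zmodType) (F : 'I_N.+1 -> T) k :
  (k <= N)%N -> ext F k = F (inord k).
Proof. by rewrite /ext ltnS => ->. Qed.

Lemma extN1 (T : zmodType) (F : 'I_N.+1 -> T) : ext F N.+1 = 0.
Proof. by rewrite /ext ltnn. Qed.

Lemma ext_dual (F : 'I_N.+1 -> X -> R) :
  (forall i, is_dual (F i)) -> forall k, is_dual (ext F k).
Proof.
by move=> dF k; rewrite /ext; case: ifP => _; [exact: dF | exact: is_dual0].
Qed.

Lemma inord_rev (i : 'I_N.+1) : inord (N - i) = rev_ord i.
Proof. by apply: val_inj; rewrite /= inordK ?ltnS ?leq_subr // subSS. Qed.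

Definition CDtoAB (q : ('I_N.+1 -> (X -> R)) * ('I_N.+1 -> X)) :
    ('I_N.+1 -> (X -> R)) * ('I_N.+1 -> X) :=
  (fun i : 'I_N.+1 => Aseq N u (ext q.1) (N - i)%N,
   fun i : 'I_N.+1 => q.2 (inord (N - i)%N)).

Lemma eq_Aseq (C C' : nat -> X -> R) n :
  (forall j, (j <= n)%N -> C j = C' j) -> Aseq N u C n = Aseq N u C' n.
Proof.
move=> eqC; rewrite /Aseq eqC //; congr (_ - _).
by apply: eq_bigr => j _; rewrite eqC // ltnW.
Qed.

Lemma ABtoCDK : cancel (ABtoCD u) CDtoAB.
Proof.
move=> [A0 B0]; rewrite /CDtoAB /ABtoCD /=; congr pair; apply/funext => i.
  have leiN : (i <= N)%N := ltn_ord i.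
  rewrite (@eq_Aseq _ (Cseq N u (ext A0))) => [|j lej]; last first.
    have lejN : (j <= N)%N := leq_trans lej (leq_subr i N).
    by rewrite ext_ord ?inordK.
  by rewrite CseqK ?leq_subr // subKn // ext_ord // inord_val.
by rewrite !inord_rev rev_ordK.
Qed.

Lemma CDtoABK : cancel CDtoAB (ABtoCD u).
Proof.
move=> [C0 D0]; rewrite /CDtoAB /ABtoCD /=; congr pair; apply/funext => i.
  have leiN : (i <= N)%N := ltn_ord i.
  rewrite (@AseqK _ _ _ _ u_gt0 (ext C0)) ?ext_ord ?inord_val //.
  by move=> m lemN; rewrite ext_ord // inordK.
by rewrite !inord_rev rev_ordK.
Qed.

Lemma ABtoCD_bij : set_bij (@dualPairs R X N) (@dualPairs R X N) (ABtoCD u).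
Proof.
split=> [[A B] dA i|p q _ _ /(can_inj ABtoCDK) //|q dq].
  by apply: Cseq_dual; exact: ext_dual.
exists (CDtoAB q); last exact: CDtoABK.
by move=> i; apply: Aseq_dual; exact: ext_dual.
Qed.

End ReversalMap.

Lemma Ufun_Vfun (R : realType) (X : normedModType R) (L sigma : R) (N : nat)
    (a b : nat -> nat -> R) (u : nat -> R)
    (A0 : 'I_N.+1 -> X -> R) (B0 : 'I_N.+1 -> X) :
  (forall i, (i <= N)%N -> 0 < u i) -> b 0%N 0%N = -1 ->
  (forall i, is_dual (A0 i)) ->
  Ufun L sigma a b u A0 B0
  = Vfun L sigma a b u (ABtoCD u (A0, B0)).1 (ABtoCD u (A0, B0)).2.
Proof.
move=> u_gt0 b00 dA0; rewrite /Ufun /Vfun /ABtoCD /=.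
have CE k : (k <= N)%N ->
    ext (fun i : 'I_N.+1 => Cseq N u (ext A0) i) k = Cseq N u (ext A0) k.
  by move=> lekN; rewrite ext_ord // inordK.
have DE k : (k <= N)%N ->
    ext (fun i : 'I_N.+1 => B0 (inord (N - i))) k = ext B0 (N - k).
  by move=> lekN; rewrite !ext_ord ?leq_subr // inordK.
rewrite (dual_step_sum_rev u_gt0 CE) (primal_step_sum_rev DE).
rewrite (b_coupling_sum (ext_dual dA0) (extN1 _) CE DE b00).
rewrite (a_coupling_sum u_gt0 (ext_dual dA0) CE DE).
lra.
Qed.

Theorem mainTheorem3 (R : realType) (X : completeNormedModType R)
  (L sigma : R) (N : nat) (a b : nat -> nat -> R) (u : nat -> R) :
  @reflexive_space R X ->
  0 < L -> 0 < sigma -> (1 <= N)%N ->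
  b 0%N 0%N = -1 ->
  (forall i, (i <= N)%N -> 0 < u i) ->
  (forall i j, (i <= j <= N)%N -> u i <= u j) ->
  (forall (A : 'I_N.+1 -> (X -> R)) (B : 'I_N.+1 -> X),
     (forall i, is_dual (A i)) ->
     Ufun L sigma a b u A B =
     Vfun L sigma a b u (ABtoCD u (A, B)).1 (ABtoCD u (A, B)).2)
  /\ set_bij (@dualPairs R X N) (@dualPairs R X N) (ABtoCD u).
Proof.
move=> _ _ _ _ b00 u_gt0 _; split=> [A B dA|]; first exact: Ufun_Vfun.
exact: ABtoCD_bij.
Qed.
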